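(* Let $\Sigma=\begin{pmatrix}\Sigma_{11}&\Sigma_{12}\\ \Sigma_{12}&\Sigma_{22}\end{pmatrix}$ be a real symmetric positive semidefinite $2\times 2$ matrix with $\Sigma_{11}>0$ and $\Sigma_{22}>0$, and let $b_1,b_2$ be real numbers. Define \[\rho=\frac{\Sigma_{12}}{\sqrt{\Sigma_{11}\Sigma_{22}}},\qquad \rho^*=\sqrt{\frac{\Sigma_{22}}{\Sigma_{11}}}.\] Let $(Z_1,Z_2)$ be a bivariate normal random vector with $\mathbb{E}Z_1=\mathbb{E}Z_2=0$, $\operatorname{Var}(Z_1)=\operatorname{Var}(Z_2)=1$ and $\operatorname{Cov}(Z_1,Z_2)=\rho$, and let $(Z_1^*,Z_2^* )$ be a bivariate normal random vector with $\mathbb{E}Z^*_1=\mathbb{E}Z^*_2=0$, $\operatorname{Var}(Z^*_1)=\operatorname{Var}(Z^*_2)=1$ and $\operatorname{Cov}(Z^*_1,Z^*_2)=\rho^*$. Let \[\alpha=\mathbb{P}(Z_1^*>b_1 \,\cup\, Z_2^*>b_2).\] Suppose that (1) $b_1\ge b_2\ge 0$, and (2) $\Sigma_{12}\ge \Sigma_{22}$. Then \[\mathbb{P}(Z_1>b_1\,\cup\, Z_2>b_2)\le \alpha .\]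
   Context: Interpretation (not needed for the statement): $\Sigma$ is the covariance matrix of two successive asymptotically normal, mean-zero treatment-effect estimates $(\hat\eta_1,\hat\eta_2)$ under the null hypothesis, $Z_k=\hat\eta_k/\sqrt{\Sigma_{kk}}$ are the standardised statistics, and $(Z_1^*,Z_2^* )$ are the standardised statistics of a sequence with the same variances but with the ''canonical'' covariance $\operatorname{Cov}=\Sigma_{22}$; $b_1,b_2$ are upper (efficacy) boundary values of a two-analysis group sequential test, computed so that the canonical sequence has type 1 error $\alpha$. Under hypotheses (2) and positive semidefiniteness one has $\Sigma_{22}\le\Sigma_{11}$, so $\rho^*\in(0,1]$ and the distribution of $(Z_1^*,Z_2^* )$ is well defined. *)

From HB Require Import structures.
From mathcomp Require Import all_boot all_order all_algebra.
From mathcomp Require Import all_classical all_reals all_analysis.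
Set Implicit Arguments. Unset Strict Implicit. Unset Printing Implicit Defensive.
Import Order.TTheory GRing.Theory Num.Theory.
Local Open Scope classical_set_scope.
Local Open Scope ring_scope.

(* Law of a standard bivariate normal vector (mean 0, variances 1,
   correlation r, with -1 <= r <= 1): the image of the product of two
   independent N(0,1) laws under the standard (Cholesky) linear map
   (x, y) |-> (x, r x + sqrt(1 - r^2) y).  This is the law N(0, A A^T) of A X
   with X standard normal in R^2 and A = [[1,0],[r,sqrt(1-r^2)]],
   A A^T = [[1,r],[r,1]]. *)
Definition std_bvn_law (R : realType) (r : R) : set (R * R) -> \bar R :=
  pushforward ((normal_prob 0 1) \x (normal_prob 0 1))%E
    (fun xy : R * R => (xy.1, r * xy.1 + Num.sqrt (1 - r ^+ 2) * xy.2)).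

Definition is_std_bvn (R : realType) (d : measure_display) (T : measurableType d)
  (P : probability T R) (Z1 Z2 : T -> R) (r : R) : Prop :=
  [/\ measurable_fun setT Z1, measurable_fun setT Z2 &
      forall A : set (R * R), measurable A ->
        P ((fun t => (Z1 t, Z2 t)) @^-1` A) = std_bvn_law r A].

From HB Require Import structures.
From mathcomp Require Import all_boot all_order all_algebra.
From mathcomp Require Import all_classical all_reals all_analysis.
From mathcomp Require Import measurable_realfun ring.
Import Order.TTheory GRing.Theory Num.Theory.
Local Open Scope classical_set_scope.
Local Open Scope ring_scope.

(** Write the standard bivariate normal vector with correlation r as
   (x, r x + s y), s = sqrt (1 - r^2), with (x, y) standard Gaussian on the
   plane: the event becomes the union of the half-planes {z.1 > b1} and
   {<u, z> > b2} for the unit vector u = (r, s).  Cauchy-Schwarz and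
   Sigma22 <= Sigma12 give 0 <= rho' <= rho <= 1, where rho' is the canonical
   correlation.  The reflection exchanging u = (rho, s) with u' = (rho', s')
   preserves the Gaussian law, swaps the two inner products and, because
   rho >= rho', does not increase the first coordinate of the points with
   <u - u', z> > 0; hence it maps the part of the rho-event outside the
   rho'-event into the part of the rho'-event outside the rho-event, and the
   inequality follows.  Invariance of the Gaussian law reduces, through its
   density, to invariance of Lebesgue measure under the reflection, which is a
   flip followed by three shears. *)

Section measure_preserving.
Context {d} {T : measurableType d} {R : realType} (mu : {measure set T -> \bar R}).
Local Open Scope ereal_scope.

Lemma ge0_integral_invariant (f : T -> T) (g : T -> \bar R) :
  measurable_fun setT f -> (forall A, measurable A -> mu (f @^-1` A) = mu A) ->
  measurable_fun setT g -> (forall x, 0 <= g x) ->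
  \int[mu]_x g (f x) = \int[mu]_x g x.
Proof.
move=> mf muf mg g0.
rewrite -[LHS]/(\int[mu]_(x in f @^-1` setT) (g \o f) x).
rewrite -ge0_integral_pushforward //.
by apply: eq_measure_integral => A mA _; exact: muf.
Qed.

Lemma le_measure_transport (f : T -> T) (U V : set T) :
  measurable U -> measurable V -> measurable_fun setT f ->
  (forall A, measurable A -> mu (f @^-1` A) = mu A) ->
  U `\` V `<=` f @^-1` (V `\` U) -> mu U <= mu V.
Proof.
move=> mU mV mf muf UV.
have mVU : measurable (V `\` U) by exact: measurableD.
rewrite (measureDI mu mU mV) (measureDI mu mV mU) setIC; apply: leeD2r.
apply: (@le_trans _ _ (mu (f @^-1` (V `\` U)))).
  apply: le_measure UV; rewrite inE; first exact: measurableD.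
  by rewrite -[X in measurable X]setTI; exact: mf.
by move/eqP: (muf _ mVU); rewrite eq_le => /andP[].
Qed.

End measure_preserving.

Section lebesgue_invariance.
Context {R : realType}.
Local Notation mu := (@lebesgue_measure R).
Local Open Scope ereal_scope.

(* Lebesgue measure lives on [measurableTypeR R], not on the sigma-algebra
   canonically attached to [R]; the type ascriptions below select the former. *)
Lemma lebesgue_measureD (c : R) (A : set R) : measurable A ->
  pushforward mu (fun x => x + c)%R A = mu A.
Proof.
have mc : measurable_fun setT (fun x : R => (x + c)%R : measurableTypeR R).
  exact: measurable_funD.
move=> mA; apply/esym.
have /(_ mc) := @lebesgue_measure_unique R
  (pushforward mu (fun x : R => (x + c)%R : measurableTypeR R)).
apply => // _ [[a b]] _ <-; rewrite /pushforward /=.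
rewrite [X in _ = mu X](_ : _ = `](a - c)%R, (b - c)%R]%classic); last first.
  by apply/seteqP; split => x /=; rewrite !in_itv /= ltrBlDr lerBrDr.
rewrite !lebesgue_measure_itv /= !lte_fin ltrD2r -!EFinD.
by congr (if _ then _ else _); congr (_%:E); rewrite opprB addrA subrK.
Qed.

Lemma ge0_integral_addr (c : R) (g : measurableTypeR R -> \bar R) :
  measurable_fun setT g -> (forall x, 0 <= g x) ->
  \int[mu]_x g (x + c)%R = \int[mu]_x g x.
Proof.
move=> mg g0.
apply: (@ge0_integral_invariant _ _ _ mu
  (fun x : R => (x + c)%R : measurableTypeR R)) => //; first exact: measurable_funD.
exact: lebesgue_measureD.
Qed.

Lemma ge0_integral_opp (g : measurableTypeR R -> \bar R) :
  measurable_fun setT g -> (forall x, 0 <= g x) ->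
  \int[mu]_x g (- x)%R = \int[mu]_x g x.
Proof.
move=> mg g0; apply: (@ge0_integral_invariant _ _ _ mu -%R) => // A.
exact: lebesgue_measureN.
Qed.

End lebesgue_invariance.

Definition shearX {R : ringType} (q : R) (z : R * R) : R * R := (z.1 + q * z.2, z.2).
Definition shearY {R : ringType} (p : R) (z : R * R) : R * R := (z.1, z.2 + p * z.1).

Section plane_invariance.
Context {R : realType}.
Local Notation mu := (@lebesgue_measure R).
Local Notation RR := (measurableTypeR R).
Local Open Scope ereal_scope.

Lemma measurable_shearX (q : R) : measurable_fun setT (shearX q : RR * RR -> RR * RR).
Proof.
by apply: measurable_fun_pair => //; apply: measurable_funD => //; exact: measurable_funM.
Qed.

Lemma measurable_shearY (p : R) : measurable_fun setT (shearY p : RR * RR -> RR * RR).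
Proof.
by apply: measurable_fun_pair => //; apply: measurable_funD => //; exact: measurable_funM.
Qed.

Variable g : RR * RR -> \bar R.
Hypotheses (mg : measurable_fun setT g) (g0 : forall z, 0 <= g z).

Lemma ge0_integral_shearX (q : R) :
  \int[mu \x mu]_z g (shearX q z) = \int[mu \x mu]_z g z.
Proof.
have mgq : measurable_fun setT (fun z : RR * RR => g (shearX q z))
  by apply: measurableT_comp => //; exact: measurable_shearX.
rewrite (fubini_tonelli2 _ mgq) // (fubini_tonelli2 _ mg) //.
apply: eq_integral => y _.
apply: (ge0_integral_addr (q * y)%R (fun x => g (x, y))) => //.
exact: measurable_fun_pair1.
Qed.

Lemma ge0_integral_shearY (p : R) :
  \int[mu \x mu]_z g (shearY p z) = \int[mu \x mu]_z g z.
Proof.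
have mgp : measurable_fun setT (fun z : RR * RR => g (shearY p z))
  by apply: measurableT_comp => //; exact: measurable_shearY.
rewrite (fubini_tonelli1 _ mgp) // (fubini_tonelli1 _ mg) //.
apply: eq_integral => x _.
apply: (ge0_integral_addr (p * x)%R (fun y => g (x, y))) => //.
exact: measurable_fun_pair2.
Qed.

Lemma ge0_integral_flipY :
  \int[mu \x mu]_z g (z.1, - z.2)%R = \int[mu \x mu]_z g z.
Proof.
have mgN : measurable_fun setT (fun z : RR * RR => g (z.1, - z.2)%R).
  apply: measurableT_comp => //; apply: measurable_fun_pair => //.
  exact: measurableT_comp.
rewrite (fubini_tonelli1 _ mgN) // (fubini_tonelli1 _ mg) //.
apply: eq_integral => x _.
by apply: (ge0_integral_opp (fun y => g (x, y))); first exact: measurable_fun_pair2.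
Qed.

End plane_invariance.

Definition dot2 {R : comRingType} (u z : R * R) : R := u.1 * z.1 + u.2 * z.2.

Definition reflect2 {R : fieldType} (w z : R * R) : R * R :=
  let k := 2 * dot2 w z / dot2 w w in (z.1 - k * w.1, z.2 - k * w.2).

Section reflect2_algebra.
Context {R : realFieldType}.
Implicit Types u v w z : R * R.

Lemma dot2_gt0 w : w.2 != 0 -> 0 < dot2 w w.
Proof. by move=> w2; rewrite /dot2 -!expr2 ltr_wpDl ?sqr_ge0 // exprn_even_gt0. Qed.

Lemma reflect2E w z : w.2 != 0 ->
  let q := w.1 / w.2 in let b := - (2 * w.1 * w.2) / dot2 w w in
  reflect2 w z = shearX q (shearY b (shearX q (z.1, - z.2))).
Proof.
move=> w2 q b; have := dot2_gt0 w w2; rewrite /reflect2 /shearX /shearY /b /q /dot2 /=.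
by move=> /gt_eqF/negbT N0; congr pair; field; rewrite w2 N0.
Qed.

Lemma reflect2K w : w.2 != 0 -> involutive (reflect2 w).
Proof.
move=> w2 z; have := dot2_gt0 w w2; rewrite /reflect2 /dot2 /=.
by case: z => z1 z2 /= /gt_eqF/negbT N0; congr pair; field.
Qed.

Lemma dot2_reflect2r w u z : dot2 u (reflect2 w z) = dot2 (reflect2 w u) z.
Proof. by rewrite /reflect2 /dot2 /=; ring. Qed.

Lemma dot2_reflect2 w z : w.2 != 0 -> dot2 (reflect2 w z) (reflect2 w z) = dot2 z z.
Proof. by move=> w2; rewrite dot2_reflect2r reflect2K. Qed.

Lemma reflect2_swap u v : dot2 u u = dot2 v v -> u.2 != v.2 ->
  reflect2 (u.1 - v.1, u.2 - v.2) u = v.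
Proof.
move=> uv uv2; set w := (u.1 - v.1, u.2 - v.2).
have N0 : dot2 w w != 0 by rewrite gt_eqF // dot2_gt0 // subr_eq0.
have wwE : dot2 w w = 2 * dot2 w u.
  apply/eqP; rewrite -subr_eq0; apply/eqP.
  by transitivity (dot2 v v - dot2 u u); [rewrite /dot2 /=; ring | rewrite uv subrr].
by rewrite /reflect2 -wwE divff // !mul1r /= !subKr; case: (v).
Qed.

Lemma reflect2_fst_le w z : 0 <= w.1 -> 0 <= dot2 w z -> (reflect2 w z).1 <= z.1.
Proof.
move=> w1 wz; rewrite /reflect2 /= gerBl mulr_ge0 // mulr_ge0 ?mulr_ge0 //.
by rewrite invr_ge0 /dot2 -!expr2 addr_ge0 ?sqr_ge0.
Qed.

End reflect2_algebra.

Section reflect2_lebesgue.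
Context {R : realType}.
Local Notation mu := (@lebesgue_measure R).
Local Notation RR := (measurableTypeR R).

Lemma measurable_reflect2 (w : R * R) :
  measurable_fun setT (reflect2 w : RR * RR -> RR * RR).
Proof.
have mk : measurable_fun setT (fun z : RR * RR => 2 * dot2 w z / dot2 w w).
  apply: measurable_funM => //; apply: measurable_funM => //.
  by apply: measurable_funD => //; exact: measurable_funM.
by apply: measurable_fun_pair; apply: measurable_funB => //; exact: measurable_funM.
Qed.

Local Open Scope ereal_scope.

Lemma ge0_integral_reflect2 (w : R * R) (g : RR * RR -> \bar R) : w.2 != 0%R ->
  measurable_fun setT g -> (forall z, 0 <= g z) ->
  \int[mu \x mu]_z g (reflect2 w z) = \int[mu \x mu]_z g z.
Proof.
move=> w2 mg g0; under eq_integral do rewrite reflect2E //.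
set q := (w.1 / w.2)%R; set b := (- (2 * w.1 * w.2) / dot2 w w)%R.
have mX (h : RR * RR -> \bar R) p : measurable_fun setT h ->
    measurable_fun setT (h \o (shearX p : RR * RR -> RR * RR)).
  by move=> mh; apply: measurableT_comp mh _; exact: measurable_shearX.
have mY (h : RR * RR -> \bar R) p : measurable_fun setT h ->
    measurable_fun setT (h \o (shearY p : RR * RR -> RR * RR)).
  by move=> mh; apply: measurableT_comp mh _; exact: measurable_shearY.
have g0' (h : RR * RR -> RR * RR) z : 0 <= (g \o h) z by exact: g0.
rewrite (ge0_integral_flipY _ (mX _ q (mY _ b (mX _ q mg))) (g0' _)).
rewrite (ge0_integral_shearX _ (mY _ b (mX _ q mg)) (g0' _)).
by rewrite (ge0_integral_shearY _ (mX _ q mg) (g0' _)) ge0_integral_shearX.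
Qed.

End reflect2_lebesgue.

Section gauss2.
Context {R : realType}.
Local Notation mu := (@lebesgue_measure R).
Local Notation RR := (measurableTypeR R).
Local Notation phi := (@normal_pdf R 0 1).
Local Notation P := (@normal_prob R 0 1).

Definition gauss2_pdf (z : RR * RR) : R := phi z.1 * phi z.2.

Lemma gauss2_pdfE z : gauss2_pdf z = normal_peak 1 ^+ 2 * expR (- dot2 z z / 2).
Proof.
rewrite /gauss2_pdf normal_pdfE ?oner_neq0 // /normal_fun !subr0 /dot2.
by rewrite mulrACA -expr2 -expRD expr1n -mulrDl -opprD -!expr2.
Qed.

Lemma gauss2_pdf_ge0 z : 0 <= gauss2_pdf z.
Proof. by rewrite mulr_ge0 ?normal_pdf_ge0. Qed.

Lemma gauss2_pdf_reflect2 (w z : R * R) : w.2 != 0 ->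
  gauss2_pdf (reflect2 w z) = gauss2_pdf z.
Proof. by move=> w2; rewrite !gauss2_pdfE dot2_reflect2. Qed.

Lemma measurable_gauss2_pdf : measurable_fun setT gauss2_pdf.
Proof.
by apply: measurable_funM; apply: measurableT_comp => //; exact: measurable_normal_pdf.
Qed.

Local Open Scope ereal_scope.

Definition gauss2_prob (A : set (RR * RR)) : \bar R :=
  \int[mu \x mu]_(z in A) (gauss2_pdf z)%:E.

Let gauss2_prob0 : gauss2_prob set0 = 0.
Proof. exact: integral_set0. Qed.

Let gauss2_prob_ge0 A : 0 <= gauss2_prob A.
Proof.
by apply: integral_ge0 => z _; rewrite lee_fin gauss2_pdf_ge0.
Qed.

Let gauss2_prob_sigma_additive : semi_sigma_additive gauss2_prob.
Proof.
apply: semi_sigma_additive_nng_induced => [|z].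
  by apply/measurable_EFinP; exact: measurable_gauss2_pdf.
by rewrite lee_fin gauss2_pdf_ge0.
Qed.

HB.instance Definition _ := isMeasure.Build _ _ _ gauss2_prob
  gauss2_prob0 gauss2_prob_ge0 gauss2_prob_sigma_additive.

Lemma normal_prob2E (A : set (RR * RR)) :
  measurable A -> (P \x P) A = gauss2_prob A.
Proof.
apply: product_measure_unique => A1 A2 mA1 mA2.
pose phiE : RR -> \bar R := EFin \o phi.
have mphi (B : set RR) : measurable B -> measurable_fun setT (phiE \_ B).
  move=> mB; apply/(measurable_restrictT _ mB)/measurable_funTS.
  by apply/measurable_EFinP; exact: measurable_normal_pdf.
have phi0 (B : set RR) x : 0 <= (phiE \_ B) x.
  by apply: erestrict_ge0 => y _; rewrite lee_fin normal_pdf_ge0.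
rewrite /= /gauss2_prob integral_mkcond.
transitivity (\int[mu \x mu]_z ((phiE \_ A1) z.1 * (phiE \_ A2) z.2)).
  apply: eq_integral => z _; rewrite !patchE in_setX.
  by case: (z.1 \in A1); case: (z.2 \in A2); rewrite ?mul0e ?mule0.
rewrite fubini_tonelli1 //=; last 2 first.
- by apply: emeasurable_funM; apply: measurableT_comp => //; exact: mphi.
- by move=> z; rewrite mule_ge0.
rewrite /fubini_F /=.
under eq_integral => x _.
  rewrite (ge0_integralZl _ measurableT (mphi _ mA2) (fun y _ => phi0 _ y) (phi0 _ x)).
  over.
rewrite /= (ge0_integralZr _ measurableT (mphi _ mA1) (fun x _ => phi0 _ x)).
  by rewrite -!integral_mkcond.
by apply: integral_ge0 => y _; exact: phi0.
Qed.

Lemma normal_prob2_reflect2 (w : R * R) (A : set (RR * RR)) : w.2 != 0%R ->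
  measurable A -> (P \x P) (reflect2 w @^-1` A) = (P \x P) A.
Proof.
move=> w2 mA; have := measurable_reflect2 w measurableT _ mA; rewrite setTI => mwA.
rewrite (normal_prob2E _ mwA) (normal_prob2E _ mA) /gauss2_prob.
rewrite [LHS]integral_mkcond [RHS]integral_mkcond.
pose f : RR * RR -> \bar R := EFin \o gauss2_pdf.
transitivity (\int[mu \x mu]_z (f \_ A) (reflect2 w z)).
  by apply: eq_integral => z _; rewrite !patchE /f /= gauss2_pdf_reflect2.
apply: ge0_integral_reflect2 => //.
  apply/(measurable_restrictT _ mA)/measurable_funTS.
  by apply/measurable_EFinP; exact: measurable_gauss2_pdf.
by apply: erestrict_ge0 => z _; rewrite lee_fin gauss2_pdf_ge0.
Qed.

End gauss2.


Section union_tail.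
Context {R : realType}.
Local Notation RR := (measurableTypeR R).
Local Notation P := (@normal_prob R 0 1).

Definition union_tail (b1 b2 : R) (u : R * R) : set (RR * RR) :=
  [set z | b1 < z.1] `|` [set z | b2 < dot2 u z].

Lemma measurable_union_tail b1 b2 u : measurable (union_tail b1 b2 u).
Proof.
have mlt (f : RR * RR -> R) c : measurable_fun setT f -> measurable [set z | c < f z].
  by move=> mf; rewrite -preimage_itvoy -[X in measurable X]setTI; exact: mf.
apply: measurableU; apply: mlt => //.
by apply: measurable_funD; exact: measurable_funM.
Qed.

Lemma union_tail_reflect2 b1 b2 u v : dot2 u u = dot2 v v -> v.1 <= u.1 ->
  u.2 != v.2 -> let w := (u.1 - v.1, u.2 - v.2) in
  union_tail b1 b2 u `\` union_tail b1 b2 v `<=`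
  reflect2 w @^-1` (union_tail b1 b2 v `\` union_tail b1 b2 u).
Proof.
move=> uv vu1 uv2 w; have w2 : w.2 != 0 by rewrite subr_eq0.
have Ru : reflect2 w u = v by exact: reflect2_swap.
have Rv : reflect2 w v = u by rewrite -Ru reflect2K.
move=> z [Uz nVz].
have [z1 vz] : z.1 <= b1 /\ dot2 v z <= b2.
  by split; rewrite leNgt; apply/negP => ?; apply: nVz; [left|right].
have uz : b2 < dot2 u z by case: Uz => // /lt_le_trans/(_ z1); rewrite ltxx.
have wz : 0 <= dot2 w z.
  rewrite (_ : dot2 w z = dot2 u z - dot2 v z); last by rewrite /dot2 /=; ring.
  by rewrite subr_ge0 ltW // (le_lt_trans vz).
have Rz1 : (reflect2 w z).1 <= b1.
  by apply: le_trans z1; apply: reflect2_fst_le wz; rewrite subr_ge0.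
split; first by right; rewrite /= dot2_reflect2r Rv.
by case=> /=; [rewrite ltNge Rz1 | rewrite dot2_reflect2r Ru ltNge vz].
Qed.

Lemma normal_prob2_union_tail_le b1 b2 u v : dot2 u u = dot2 v v -> v.1 <= u.1 ->
  u.2 != v.2 -> ((P \x P) (union_tail b1 b2 u) <= (P \x P) (union_tail b1 b2 v))%E.
Proof.
move=> uv vu1 uv2; have w2 : (u.1 - v.1, u.2 - v.2).2 != 0 by rewrite subr_eq0.
apply: (le_measure_transport _ (reflect2 (u.1 - v.1, u.2 - v.2) : RR * RR -> RR * RR)).
- exact: measurable_union_tail.
- exact: measurable_union_tail.
- exact: measurable_reflect2.
- by move=> A mA; exact: normal_prob2_reflect2.
- exact: union_tail_reflect2.
Qed.

End union_tail.

Section correlation.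
Context {R : realType}.
Local Notation P := (@normal_prob R 0 1).

Definition corr_vec (r : R) : R * R := (r, Num.sqrt (1 - r ^+ 2)).

Lemma dot2_corr_vec r : 0 <= r <= 1 -> dot2 (corr_vec r) (corr_vec r) = 1.
Proof.
case/andP=> r0 r1; rewrite /dot2 /= -!expr2 sqr_sqrtr ?subrKC //.
by rewrite subr_ge0 expr_le1.
Qed.

Lemma normal_prob2_union_tail_corr_le b1 b2 r rs : 0 <= rs -> rs <= r -> r <= 1 ->
  ((P \x P) (union_tail b1 b2 (corr_vec r)) <=
   (P \x P) (union_tail b1 b2 (corr_vec rs)))%E.
Proof.
move=> rs0 rsr r1; have [->//|rs_neq_r] := eqVneq rs r.
have rs_lt_r : rs < r by rewrite lt_neqAle rs_neq_r.
have r0 : 0 <= r := le_trans rs0 rsr.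
apply: normal_prob2_union_tail_le => //=.
  by rewrite !dot2_corr_vec ?rs0 ?r0 ?r1 ?(le_trans rsr).
rewrite lt_eqF // ltr_sqrt ?ltrD2l ?ltrN2 ?ltr_pXn2r ?nnegrE //.
by rewrite subr_gt0 expr_lt1 // (lt_le_trans rs_lt_r).
Qed.

Lemma std_bvn_union {d} {T : measurableType d} {Q : probability T R} {Z1 Z2 : T -> R}
    {r : R} (b1 b2 : R) : is_std_bvn Q Z1 Z2 r ->
  Q ([set t | b1 < Z1 t] `|` [set t | b2 < Z2 t]) =
  (P \x P)%E (union_tail b1 b2 (corr_vec r)).
Proof.
case=> _ _ law.
have mA : measurable ([set p : R * R | b1 < p.1] `|` [set p | b2 < p.2]).
  apply: measurableU; rewrite -[X in measurable X]setTI -preimage_itvoy.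
    exact: measurable_fst.
  exact: measurable_snd.
by move: (law _ mA); rewrite /std_bvn_law /pushforward => <-.
Qed.

End correlation.

Lemma psd2_cauchy_schwarz {R : realFieldType} {S : 'M[R]_2} :
  S^T = S -> (forall v : 'cV[R]_2, 0 <= (v^T *m S *m v) ord0 ord0) ->
  0 < S ord0 ord0 -> S ord0 ord_max ^+ 2 <= S ord0 ord0 * S ord_max ord_max.
Proof.
move=> symS psdS S00_gt0.
have S10E : S ord_max ord0 = S ord0 ord_max by rewrite -{1}symS mxE.
pose v : 'cV[R]_2 := \col_i (if i == ord0 then S ord0 ord_max else - S ord0 ord0).
have := psdS v.
rewrite !mxE !big_ord_recl !big_ord0 !mxE !big_ord_recl !big_ord0 !mxE /=.
have -> : lift ord0 ord0 = ord_max :> 'I_2 by apply/val_inj.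
rewrite S10E => vSv_ge0.
have : 0 <= S ord0 ord0 * (S ord0 ord0 * S ord_max ord_max - S ord0 ord_max ^+ 2).
  by move: vSv_ge0; congr (_ <= _); ring.
by rewrite pmulr_rge0 // subr_ge0.
Qed.

Lemma corr_bounds {R : rcfType} {a c m : R} : 0 < a -> 0 < c -> c <= m ->
  m ^+ 2 <= a * c ->
  Num.sqrt (c / a) <= m / Num.sqrt (a * c) /\ m / Num.sqrt (a * c) <= 1.
Proof.
move=> a0 c0 cm mac; have ac0 : 0 < Num.sqrt (a * c) by rewrite sqrtr_gt0 mulr_gt0.
have m0 : 0 <= m by apply: le_trans cm; exact: ltW.
split.
  rewrite ler_pdivlMr // -sqrtrM; last by rewrite divr_ge0 // ltW.
  have -> : c / a * (a * c) = c ^+ 2 by field; rewrite gt_eqF.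
  by rewrite sqrtr_sqr ger0_norm // ltW.
by rewrite ler_pdivrMr // mul1r -(ger0_norm m0) -sqrtr_sqr ler_sqrt // mulr_ge0 // ltW.
Qed.

Theorem theorem2 (R : realType) (S : 'M[R]_2) (b1 b2 : R)
  (d : measure_display) (T : measurableType d) (P : probability T R)
  (Z1 Z2 : T -> R)
  (d' : measure_display) (T' : measurableType d') (P' : probability T' R)
  (Z1s Z2s : T' -> R) :
  S^T = S ->
  (forall v : 'cV[R]_2, 0 <= (v^T *m S *m v) ord0 ord0) ->
  0 < S ord0 ord0 -> 0 < S ord_max ord_max ->
  let rho := S ord0 ord_max / Num.sqrt (S ord0 ord0 * S ord_max ord_max) in
  let rhos := Num.sqrt (S ord_max ord_max / S ord0 ord0) in
  is_std_bvn P Z1 Z2 rho ->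
  is_std_bvn P' Z1s Z2s rhos ->
  b2 <= b1 -> 0 <= b2 ->
  S ord_max ord_max <= S ord0 ord_max ->
  (P ([set t | (b1 < Z1 t)%R] `|` [set t | (b2 < Z2 t)%R])
   <= P' ([set t | (b1 < Z1s t)%R] `|` [set t | (b2 < Z2s t)%R]))%E.
Proof.
move=> symS psdS S00_gt0 S11_gt0 rho rhos bvn bvns _ _ S11_le_S01.
rewrite (std_bvn_union b1 b2 bvn) (std_bvn_union b1 b2 bvns).
have [rhos_le_rho rho_le1] := corr_bounds S00_gt0 S11_gt0 S11_le_S01
  (psd2_cauchy_schwarz symS psdS S00_gt0).
exact: normal_prob2_union_tail_corr_le (sqrtr_ge0 _) rhos_le_rho rho_le1.
Qed.
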